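(* Let $F$ be a hyperfield whose additive hypergroup is superiorly canonical. Then there exists a Krasner valuation $v$ on $F$ whose norm satisfies $\mathrm{ig}(\rho_v)=\{0\}$, and any two Krasner valuations on $F$ with this property are equivalent.
   Context: A canonical hypergroup is a triple $(H,+,0)$ where $H\neq\emptyset$, $+$ assigns to each pair a subset $x+y\subseteq H$ (for sets $A+B:=\bigcup_{a\in A,b\in B}a+b$), $0\in H$, such that $+$ is associative and commutative, each $x$ has a unique $-x$ with $0\in x+(-x)$, and $z\in x+y\Rightarrow y\in z+(-x)$; write $x-y:=x+(-y)$. A hyperfield is $(F,+,\cdot,0,1)$ with $(F,+,0)$ a canonical hypergroup, $(F,\cdot)$ commutative with $0$ absorbing, $x(y+z)=xy+xz$, and $F\setminus\{0\}$ an abelian group with neutral $1\neq 0$. A canonical hypergroup $H$ is superiorly canonical if: (SCH1) $x\in x+y$ implies $x+y=\{x\}$; (SCH2) $(x+y)\cap(z+t)\neq\emptyset$ implies $x+y\subseteq z+t$ or $z+t\subseteq x+y$; (SCH3) for $x\neq y$ and $z,t\in x-y$, $z-z=t-t$; (SCH4) if $x\in z-z$ and $y\notin z-z$ then $x-x\subseteq y-y$. Valuation on $F$: for an ordered abelian group $\Gamma$ and $\infty>\Gamma$ with $\gamma+\infty=\infty+\gamma=\infty$, a surjective map $v:F\to\Gamma\cup\{\infty\}$ with $vx=\infty\iff x=0$, $v(xy)=vx+vy$, $z\in x+y\Rightarrow vz\ge\min\{vx,vy\}$; $vF:=v(F\setminus\{0\})$. Valuations $v_i:F\to\Gamma_i\cup\{\infty\}$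 are equivalent if $v_2=\sigma\circ v_1$ for an order-preserving group isomorphism $\sigma:\Gamma_1\to\Gamma_2$ ($\sigma(\infty)=\infty$). An initial segment of $\Gamma$ is $\rho\subseteq\Gamma$ with $\delta\in\rho,\gamma<\delta\Rightarrow\gamma\in\rho$; $\rho+\gamma:=\{\delta+\gamma:\delta\in\rho\}$; ''$\alpha>\rho+\gamma$'' means $\alpha\notin\rho+\gamma$; $\mathrm{ig}(\rho):=\{\gamma\in\Gamma:\rho+\gamma=\rho\}$. Krasner valuation: a valuation $v$ on $F$ such that (KVH1) for all $x,y\in F$ with $0\notin x+y$, $v(x+y)$ is a singleton; (KVH2) there is an initial segment $\rho_v$ of $vF$ with $0\in\rho_v$ (the norm) such that for all $x,y,z,t\in F$ with $z\in x+y$: $t\in x+y$ iff $vs>\rho_v+\min\{vx,vy\}$ for all $s\in z-t$. *)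

Set Implicit Arguments.

Definition subset {T : Type} (A B : T -> Prop) := forall t, A t -> B t.
Definition set_eq {T : Type} (A B : T -> Prop) := forall t, A t <-> B t.

Record hyperfield := Hyperfield {
  hf_car :> Type;
  hadd : hf_car -> hf_car -> hf_car -> Prop;   (* hadd x y z  <->  z \in x + y *)
  hzero : hf_car;
  hneg : hf_car -> hf_car;
  hmul : hf_car -> hf_car -> hf_car;
  hone : hf_car;
  hadd_assoc : forall x y z w,
      (exists u, hadd x y u /\ hadd u z w) <-> (exists u, hadd y z u /\ hadd x u w);
  hadd_comm : forall x y z, hadd x y z <-> hadd y x z;
  hneg_spec : forall x, hadd x (hneg x) hzero;
  hneg_uniq : forall x y, hadd x y hzero -> y = hneg x;
  hadd_rev : forall x y z, hadd x y z -> hadd z (hneg x) y;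
  hmul_comm : forall x y, hmul x y = hmul y x;
  hmul_assoc : forall x y z, hmul x (hmul y z) = hmul (hmul x y) z;
  hmul_0l : forall x, hmul hzero x = hzero;
  hmul_1l : forall x, hmul hone x = x;
  hone_neq0 : hone <> hzero;
  hmul_neq0 : forall x y, x <> hzero -> y <> hzero -> hmul x y <> hzero;
  hmul_inv : forall x, x <> hzero -> exists y, y <> hzero /\ hmul x y = hone;
  (* distributivity x(y+z) = xy + xz as sets *)
  hmul_distr : forall x y z w,
      (exists u, hadd y z u /\ w = hmul x u) <-> hadd (hmul x y) (hmul x z) w
}.

Arguments hadd {h}.
Arguments hneg {h}.
Arguments hmul {h}.

Definition hsum {F : hyperfield} (x y : F) : F -> Prop := fun z => hadd x y z.
Definition hdiff {F : hyperfield} (x y : F) : F -> Prop := hsum x (hneg y).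

Definition superiorly_canonical (F : hyperfield) : Prop :=
  (* SCH1 *)
  (forall x y : F, hsum x y x -> set_eq (hsum x y) (fun w => w = x)) /\
  (* SCH2 *)
  (forall x y z t : F, (exists w, hsum x y w /\ hsum z t w) ->
       subset (hsum x y) (hsum z t) \/ subset (hsum z t) (hsum x y)) /\
  (* SCH3 *)
  (forall x y z t : F, x <> y -> hdiff x y z -> hdiff x y t ->
       set_eq (hdiff z z) (hdiff t t)) /\
  (* SCH4 *)
  (forall x y z : F, hdiff z z x -> ~ hdiff z z y -> subset (hdiff x x) (hdiff y y)).

Record OAG := MkOAG {
  og_car :> Type;
  og_add : og_car -> og_car -> og_car;
  og_zero : og_car;
  og_opp : og_car -> og_car;
  og_le : og_car -> og_car -> Prop;
  og_addA : forall a b c, og_add a (og_add b c) = og_add (og_add a b) c;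
  og_addC : forall a b, og_add a b = og_add b a;
  og_add0 : forall a, og_add og_zero a = a;
  og_addN : forall a, og_add (og_opp a) a = og_zero;
  og_le_refl : forall a, og_le a a;
  og_le_trans : forall a b c, og_le a b -> og_le b c -> og_le a c;
  og_le_antisym : forall a b, og_le a b -> og_le b a -> a = b;
  og_le_total : forall a b, og_le a b \/ og_le b a;
  og_le_add : forall a b c, og_le a b -> og_le (og_add a c) (og_add b c)
}.

Arguments og_add {o}.
Arguments og_opp {o}.
Arguments og_le {o}.

(* Gamma \cup {oo}, with None = oo *)
Definition ext_add {G : OAG} (a b : option G) : option G :=
  match a, b with Some a, Some b => Some (og_add a b) | _, _ => None end.

Definition ext_le {G : OAG} (a b : option G) : Prop :=
  match a, b with
  | _, None => True
  | None, Some _ => False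
  | Some a, Some b => og_le a b
  end.

Definition is_min {G : OAG} (m a b : option G) : Prop :=
  (ext_le a b /\ m = a) \/ (ext_le b a /\ m = b).

Definition valuation {F : hyperfield} {G : OAG} (v : F -> option G) : Prop :=
  (forall g : option G, exists x, v x = g) /\
  (forall x, v x = None <-> x = hzero F) /\
  (forall x y, v (hmul x y) = ext_add (v x) (v y)) /\
  (forall x y z, hsum x y z -> exists m, is_min m (v x) (v y) /\ ext_le m (v z)).

(* Initial segments of vF (= Gamma, since v is surjective) *)
Definition initial_segment {G : OAG} (rho : G -> Prop) : Prop :=
  forall d g : G, rho d -> og_le g d -> rho g.

(* alpha \in rho + gamma  <->  rho (alpha - gamma) *)
Definition in_translate {G : OAG} (rho : G -> Prop) (g a : G) : Prop :=
  rho (og_add a (og_opp g)).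

(* "a > rho + g", i.e. a \notin rho + g, for a, g in Gamma \cup {oo}.
   Convention for g = oo: rho + oo is taken to be all of Gamma, so
   a > rho + oo iff a = oo. *)
Definition above {G : OAG} (rho : G -> Prop) (g a : option G) : Prop :=
  match g, a with
  | Some g, Some a => ~ in_translate rho g a
  | Some _, None => True
  | None, a => a = None
  end.

Definition krasner_valuation {F : hyperfield} {G : OAG} (v : F -> option G)
    (rho : G -> Prop) : Prop :=
  valuation v /\
  (* KVH1 *)
  (forall x y : F, ~ hsum x y (hzero F) ->
     exists g, (exists z, hsum x y z /\ v z = g) /\ (forall z, hsum x y z -> v z = g)) /\
  (* KVH2 : rho is the norm *)
  initial_segment rho /\ rho (og_zero G) /\
  (forall x y z t : F, hsum x y z ->
     (hsum x y t <->
      forall s, hdiff z t s -> forall m, is_min m (v x) (v y) -> above rho m (v s))).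

Definition ig {G : OAG} (rho : G -> Prop) : G -> Prop :=
  fun g => forall a : G, in_translate rho g a <-> rho a.

Definition ig_trivial {G : OAG} (rho : G -> Prop) : Prop :=
  forall g : G, ig rho g <-> g = og_zero G.

Definition equivalent_valuations {F : hyperfield} {G1 G2 : OAG}
    (v1 : F -> option G1) (v2 : F -> option G2) : Prop :=
  exists sigma : G1 -> G2,
    (forall a b, sigma (og_add a b) = og_add (sigma a) (sigma b)) /\
    (forall a b, og_le a b <-> og_le (sigma a) (sigma b)) /\
    (forall b : G2, exists a, sigma a = b) /\
    (forall x, v2 x = option_map sigma (v1 x)).

(* In a superiorly canonical hyperfield the balls B(x) := x - x are totally ordered by inclusion
   (SCH2) and B(ux) = u B(x), so F^x modulo "having the same ball" is an ordered abelian group under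
   reverse inclusion.  The valuation sends x to its ball, and the norm consists of the balls of
   the x with x \notin B(1).  Since a summand with the larger ball absorbs the other (SCH1),
   t \in x + y iff z - t lies in B(x) \cup B(y) for any z \in x + y, which is KVH2; KVH1 is SCH3 and
   SCH4 makes the norm an initial segment.
   Conversely, every Krasner valuation satisfies B(x) = {s | vs > rho + vx}, and when ig(rho) is
   trivial this forces vx <= vy <-> B(y) \subset B(x).  So such a valuation is determined by the
   balls up to an order isomorphism of value groups. *)

From Stdlib Require Import Classical ClassicalEpsilon FunctionalExtensionality PropExtensionality ProofIrrelevance.

#[local] Arguments og_addA {o} a b c.
#[local] Arguments og_addC {o} a b.
#[local] Arguments og_add0 {o} a.
#[local] Arguments og_addN {o} a.
#[local] Arguments og_le_refl {o} a.
#[local] Arguments og_le_antisym {o} a b.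
#[local] Arguments og_le_total {o} a b.
#[local] Arguments og_le_add {o} a b c.

#[local] Arguments hadd_assoc {h} x y z w.
#[local] Arguments hadd_comm {h} x y z.
#[local] Arguments hneg_spec {h} x.
#[local] Arguments hneg_uniq {h} x y.
#[local] Arguments hadd_rev {h} x y z.
#[local] Arguments hmul_comm {h} x y.
#[local] Arguments hmul_assoc {h} x y z.
#[local] Arguments hmul_0l {h} x.
#[local] Arguments hmul_1l {h} x.
#[local] Arguments hmul_neq0 {h} x y.
#[local] Arguments hmul_inv {h} x.
#[local] Arguments hmul_distr {h} x y z w.

Lemma set_eq_ext {T : Type} (A C : T -> Prop) : set_eq A C -> A = C.
Proof.
  intro H. apply functional_extensionality. intro t. apply propositional_extensionality. apply H.
Qed.

Lemma og_add0_r {G : OAG} (a : G) : og_add a (og_zero G) = a.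
Proof. rewrite og_addC. apply og_add0. Qed.

Lemma og_addN_r {G : OAG} (a : G) : og_add a (og_opp a) = og_zero G.
Proof. rewrite og_addC. apply og_addN. Qed.

Lemma og_add_cancel_r {G : OAG} (a b c : G) : og_add a c = og_add b c -> a = b.
Proof.
  intro H. apply (f_equal (fun t => og_add t (og_opp c))) in H.
  rewrite <- !og_addA, !og_addN_r, !og_add0_r in H. exact H.
Qed.

Lemma og_idem_eq0 {G : OAG} (c : G) : og_add c c = c -> c = og_zero G.
Proof. intro H. apply (og_add_cancel_r _ _ c). rewrite og_add0. exact H. Qed.

Lemma og_double_eq0 {G : OAG} (c : G) : og_add c c = og_zero G -> c = og_zero G.
Proof.
  intro H. destruct (og_le_total c (og_zero G)) as [L|L];
    apply og_le_antisym; auto; pose proof (og_le_add _ _ c L) as L2;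
    rewrite H, og_add0 in L2; exact L2.
Qed.

Lemma og_le_add_l {G : OAG} (a b c : G) : og_le a b -> og_le (og_add c a) (og_add c b).
Proof. intro H. rewrite !(og_addC c). now apply og_le_add. Qed.

Lemma og_le_add_nonneg {G : OAG} (d e : G) : og_le (og_zero G) d -> og_le e (og_add e d).
Proof. intro H. pose proof (og_le_add_l _ _ e H) as L. rewrite og_add0_r in L. exact L. Qed.

Lemma og_opp_involutive {G : OAG} (a : G) : og_opp (og_opp a) = a.
Proof. apply (og_add_cancel_r _ _ (og_opp a)). rewrite og_addN, og_addN_r. reflexivity. Qed.

Lemma og_opp0 {G : OAG} : og_opp (og_zero G) = og_zero G.
Proof. rewrite <- (og_addN (og_zero G)) at 2. rewrite og_add0_r. reflexivity. Qed.

Lemma og_le_opp {G : OAG} (a b : G) : og_le a b -> og_le (og_opp b) (og_opp a).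
Proof.
  intro H. pose proof (og_le_add _ _ (og_add (og_opp a) (og_opp b)) H) as L.
  rewrite og_addA, og_addN_r, og_add0 in L.
  rewrite (og_addC (og_opp a)), og_addA, og_addN_r, og_add0 in L. exact L.
Qed.

Lemma ig_zero {G : OAG} (rho : G -> Prop) : ig rho (og_zero G).
Proof. intro a. unfold in_translate. rewrite og_opp0, og_add0_r. reflexivity. Qed.

Lemma ext_le_refl {G : OAG} (a : option G) : ext_le a a.
Proof. destruct a; simpl; auto. apply og_le_refl. Qed.

Lemma ext_le_total {G : OAG} (a b : option G) : ext_le a b \/ ext_le b a.
Proof. destruct a, b; simpl; auto. apply og_le_total. Qed.

Lemma is_min_exists {G : OAG} (a b : option G) : exists m, is_min m a b.
Proof. destruct (ext_le_total a b); [exists a; left | exists b; right]; auto. Qed.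

Lemma hneg_involutive {F : hyperfield} (x : F) : hneg (hneg x) = x.
Proof. symmetry. apply hneg_uniq. apply hadd_comm. apply hneg_spec. Qed.

Lemma hmul_0_r {F : hyperfield} (x : F) : hmul x (hzero F) = hzero F.
Proof. rewrite hmul_comm. apply hmul_0l. Qed.

Lemma hmul_1_r {F : hyperfield} (x : F) : hmul x (hone F) = x.
Proof. rewrite hmul_comm. apply hmul_1l. Qed.

Lemma hadd_mul_l {F : hyperfield} (u a b c : F) :
  hadd a b c -> hadd (hmul u a) (hmul u b) (hmul u c).
Proof. intro H. apply hmul_distr. exists c; auto. Qed.

Lemma hneg_mul_m1 {F : hyperfield} (x : F) : hneg x = hmul (hneg (hone F)) x.
Proof.
  pose proof (hadd_mul_l x _ _ _ (hneg_spec (hone F))) as H.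
  rewrite hmul_0_r, hmul_1_r in H. apply hneg_uniq in H. rewrite <- H. apply hmul_comm.
Qed.

Lemma hadd_neg {F : hyperfield} (a b c : F) : hadd a b c -> hadd (hneg a) (hneg b) (hneg c).
Proof. rewrite (hneg_mul_m1 a), (hneg_mul_m1 b), (hneg_mul_m1 c). apply hadd_mul_l. Qed.

Lemma hadd_0_r {F : hyperfield} (x : F) : hadd x (hzero F) x.
Proof.
  apply hadd_comm. pose proof (hadd_rev _ _ _ (hneg_spec (hneg x))) as H.
  rewrite !hneg_involutive in H. exact H.
Qed.

Lemma hadd_0_r_eq {F : hyperfield} (x w : F) : hadd x (hzero F) w -> w = x.
Proof.
  intro H. apply hadd_rev, hneg_uniq in H.
  rewrite <- (hneg_involutive x), H, hneg_involutive. reflexivity.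
Qed.

Lemma hadd_0_l_eq {F : hyperfield} (x w : F) : hadd (hzero F) x w -> w = x.
Proof. intro H. apply hadd_0_r_eq. now apply hadd_comm. Qed.

Lemma hadd_nonempty {F : hyperfield} (x y : F) : exists w, hadd x y w.
Proof.
  destruct (proj2 (hadd_assoc x y (hneg y) x)) as [u [Hu _]].
  - exists (hzero F). split; [apply hneg_spec | apply hadd_0_r].
  - now exists u.
Qed.

Lemma hadd_swap {F : hyperfield} (a b c w : F) :
  (exists u, hadd a b u /\ hadd u c w) -> exists u, hadd a c u /\ hadd u b w.
Proof.
  intro H. apply hadd_assoc in H. destruct H as [u [H1 H2]].
  apply hadd_assoc. exists u. split; auto. now apply hadd_comm.
Qed.

Lemma hadd_of_hdiff {F : hyperfield} (z t s : F) : hdiff z t s -> hadd s t z.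
Proof.
  unfold hdiff, hsum. intro H. apply hadd_comm, hadd_rev in H.
  now rewrite hneg_involutive in H.
Qed.

Definition hinv {F : hyperfield} (x : F) : F :=
  epsilon (inhabits (hzero F)) (fun y => hmul x y = hone F).

Lemma hmul_hinv {F : hyperfield} (x : F) : x <> hzero F -> hmul x (hinv x) = hone F.
Proof.
  intro hx. unfold hinv. apply (epsilon_spec _ (fun y => hmul x y = hone F)).
  destruct (hmul_inv x hx) as [y [_ Hy]]. now exists y.
Qed.

Lemma hinv_neq0 {F : hyperfield} (x : F) : x <> hzero F -> hinv x <> hzero F.
Proof. intros hx E. apply (hone_neq0 F). rewrite <- (hmul_hinv x hx), E. apply hmul_0_r. Qed.

Lemma hmul_hinv_cancel_l {F : hyperfield} (u x : F) :
  u <> hzero F -> hmul (hinv u) (hmul u x) = x.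
Proof. intro hu. rewrite hmul_assoc, (hmul_comm _ u), hmul_hinv, hmul_1l; auto. Qed.

Definition ball {F : hyperfield} (x : F) : F -> Prop := hdiff x x.

Lemma ball_iff {F : hyperfield} (x d : F) : ball x d <-> hadd x d x.
Proof.
  unfold ball, hdiff, hsum. split; intro H.
  - apply hadd_comm, hadd_rev in H. rewrite hneg_involutive in H. now apply hadd_comm.
  - now apply hadd_rev in H.
Qed.

Lemma ball_0 {F : hyperfield} (x : F) : ball x (hzero F).
Proof. apply hneg_spec. Qed.

Lemma ball_of_0 {F : hyperfield} (d : F) : ball (hzero F) d <-> d = hzero F.
Proof.
  rewrite ball_iff. split; intro H.
  - apply hadd_comm, hadd_0_r_eq in H. now symmetry.
  - subst. apply hadd_0_r.
Qed.

Lemma ball_neg {F : hyperfield} (x d : F) : ball x d -> ball x (hneg d).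
Proof.
  unfold ball, hdiff, hsum. intro H. apply hadd_neg in H. rewrite hneg_involutive in H.
  now apply hadd_comm.
Qed.

Lemma ball_scale {F : hyperfield} (u x d : F) : ball x d -> ball (hmul u x) (hmul u d).
Proof. rewrite !ball_iff. apply hadd_mul_l. Qed.

Lemma ball_scale_iff {F : hyperfield} (u x d : F) :
  u <> hzero F -> ball (hmul u x) (hmul u d) <-> ball x d.
Proof.
  intro hu. split; [|apply ball_scale]. intro H.
  apply (ball_scale (hinv u)) in H. now rewrite !hmul_hinv_cancel_l in H.
Qed.

Lemma ball_mul_r {F : hyperfield} (x y d : F) :
  y <> hzero F -> ball (hmul x y) d <-> ball x (hmul (hinv y) d).
Proof.
  intro hy. rewrite <- (ball_scale_iff y x _ hy), (hmul_comm x y).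
  rewrite hmul_assoc, (hmul_hinv y hy), hmul_1l. reflexivity.
Qed.

Lemma ball_mul_congr_r {F : hyperfield} (x x' y : F) :
  y <> hzero F -> ball x = ball x' -> ball (hmul x y) = ball (hmul x' y).
Proof.
  intros hy E. apply set_eq_ext. intro d.
  rewrite (ball_mul_r x y d hy), (ball_mul_r x' y d hy), E. reflexivity.
Qed.

Lemma ball_mul_congr {F : hyperfield} (x x' y y' : F) :
  x' <> hzero F -> y <> hzero F -> ball x = ball x' -> ball y = ball y' ->
  ball (hmul x y) = ball (hmul x' y').
Proof.
  intros hx' hy E1 E2. rewrite (ball_mul_congr_r x x' y hy E1), (hmul_comm x' y), (hmul_comm x' y').
  now apply ball_mul_congr_r.
Qed.

Lemma ball_mul_hinv_of_ball_eq {F : hyperfield} (x x' : F) :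
  x <> hzero F -> ball x = ball x' -> ball (hmul x' (hinv x)) = ball (hone F).
Proof.
  intros hx E. rewrite <- (hmul_hinv x hx).
  apply ball_mul_congr_r; [now apply hinv_neq0 | now symmetry].
Qed.

Lemma ball_hinv_congr {F : hyperfield} (x x' : F) :
  x <> hzero F -> x' <> hzero F -> ball x = ball x' -> ball (hinv x) = ball (hinv x').
Proof.
  intros hx hx' E.
  pose proof (ball_mul_congr_r _ _ (hinv x') (hinv_neq0 x' hx') (ball_mul_hinv_of_ball_eq x x' hx E)) as E'.
  rewrite hmul_1l, (hmul_comm x'), <- hmul_assoc, (hmul_hinv x' hx'), hmul_1_r in E'.
  exact E'.
Qed.

Lemma ball_one_congr {F : hyperfield} (x x' : F) :
  x <> hzero F -> ball x = ball x' -> ball (hone F) x -> ball (hone F) x'.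
Proof.
  intros hx E H. apply (ball_scale (hmul x' (hinv x))) in H.
  rewrite hmul_1_r, (ball_mul_hinv_of_ball_eq x x' hx E) in H.
  rewrite <- hmul_assoc, (hmul_comm (hinv x) x), (hmul_hinv x hx), hmul_1_r in H. exact H.
Qed.

Section SuperiorlyCanonical.

Variable F : hyperfield.
Hypothesis SC : superiorly_canonical F.

Lemma hadd_ball_eq (x d w : F) : ball x d -> hadd x d w -> w = x.
Proof.
  intro Hd. apply ball_iff in Hd. destruct SC as [SCH1 _]. apply (SCH1 x d Hd w).
Qed.

Lemma ball_not_self (x : F) : x <> hzero F -> ~ ball x x.
Proof.
  intros hx H. apply hx. symmetry.
  exact (hadd_ball_eq x (hneg x) _ (ball_neg x x H) (hneg_spec x)).
Qed.

Lemma ball_total (x y : F) : subset (ball x) (ball y) \/ subset (ball y) (ball x).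
Proof.
  destruct SC as [_ [SCH2 _]]. apply (SCH2 x (hneg x) y (hneg y)).
  exists (hzero F). split; apply hneg_spec.
Qed.

Lemma ball_subset_of_notin (z x y : F) : ball z x -> ~ ball z y -> subset (ball x) (ball y).
Proof. destruct SC as [_ [_ [_ SCH4]]]. apply SCH4. Qed.

Lemma ball_hdiff_eq (x y z t : F) : x <> y -> hdiff x y z -> hdiff x y t -> ball z = ball t.
Proof. destruct SC as [_ [_ [SCH3 _]]]. intros. apply set_eq_ext. now apply (SCH3 x y). Qed.

Lemma hadd_cancel_dominant (x y z w : F) :
  hadd x y z -> subset (ball y) (ball x) -> hadd z (hneg y) w -> w = x.
Proof.
  intros Hz Hsub Hw.
  destruct (proj1 (hadd_assoc x y (hneg y) w) (ex_intro _ z (conj Hz Hw))) as [u [Hu Hxu]].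
  exact (hadd_ball_eq x u w (Hsub u Hu) Hxu).
Qed.

Lemma ball_hadd_subset (x y z : F) :
  hadd x y z -> subset (ball y) (ball x) -> subset (ball z) (ball x).
Proof.
  intros Hz Hsub d Hd. apply ball_iff. destruct (hadd_nonempty x d) as [w Hw].
  assert (Hx : hadd z (hneg y) x) by (apply hadd_rev; now apply hadd_comm).
  destruct (hadd_swap z (hneg y) d w (ex_intro _ x (conj Hx Hw))) as [u [Hu1 Hu2]].
  rewrite (hadd_ball_eq z d u Hd Hu1) in Hu2.
  now rewrite (hadd_cancel_dominant x y z w Hz Hsub Hu2) in Hw.
Qed.

Lemma hadd_iff_hdiff_in_ball_dominant (x y z t : F) :
  hadd x y z -> subset (ball y) (ball x) ->
  (hadd x y t <-> forall s, hdiff z t s -> ball x s).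
Proof.
  intros Hz Hsub. split.
  - intros Ht s Hs. apply hadd_of_hdiff in Hs.
    destruct (proj2 (hadd_assoc s x y z) (ex_intro _ t (conj Ht Hs))) as [u [Hsu Huz]].
    assert (Hzu : hadd z (hneg y) u) by (apply hadd_rev; now apply hadd_comm).
    rewrite (hadd_cancel_dominant x y z u Hz Hsub Hzu) in Hsu.
    apply ball_iff. now apply hadd_comm.
  - intro H. destruct (hadd_nonempty z (hneg t)) as [s Hs].
    pose proof (hadd_rev _ _ _ (hadd_of_hdiff z t s Hs)) as Hzt.
    destruct (hadd_swap x y (hneg s) t (ex_intro _ z (conj Hz Hzt))) as [u [Hu Hut]].
    now rewrite (hadd_ball_eq x (hneg s) u (ball_neg x s (H s Hs)) Hu) in Hut.
Qed.

Lemma hadd_iff_hdiff_in_balls (x y z t : F) :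
  hadd x y z -> (hadd x y t <-> forall s, hdiff z t s -> ball x s \/ ball y s).
Proof.
  intro Hz. destruct (ball_total x y) as [Hxy|Hyx].
  - rewrite (hadd_comm x y t).
    rewrite (hadd_iff_hdiff_in_ball_dominant y x z t (proj1 (hadd_comm x y z) Hz) Hxy).
    split; intros H s Hs; [now right; apply H | destruct (H s Hs); auto].
  - rewrite (hadd_iff_hdiff_in_ball_dominant x y z t Hz Hyx).
    split; intros H s Hs; [now left; apply H | destruct (H s Hs); auto].
Qed.

End SuperiorlyCanonical.


Definition balls (F : hyperfield) : Type :=
  {A : F -> Prop | exists x, x <> hzero F /\ A = ball x}.

Definition ball_of {F : hyperfield} (x : F) (hx : x <> hzero F) : balls F :=
  exist _ (ball x) (ex_intro _ x (conj hx eq_refl)).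

Definition ball_rep {F : hyperfield} (g : balls F) : F :=
  epsilon (inhabits (hzero F)) (fun x => x <> hzero F /\ proj1_sig g = ball x).

Lemma ball_rep_spec {F : hyperfield} (g : balls F) :
  ball_rep g <> hzero F /\ proj1_sig g = ball (ball_rep g).
Proof.
  apply (epsilon_spec _ (fun x => x <> hzero F /\ proj1_sig g = ball x)). apply (proj2_sig g).
Qed.

Lemma ball_rep_neq0 {F : hyperfield} (g : balls F) : ball_rep g <> hzero F.
Proof. apply ball_rep_spec. Qed.

Lemma balls_eq {F : hyperfield} (g h : balls F) : proj1_sig g = proj1_sig h -> g = h.
Proof.
  destruct g as [g pg], h as [h ph]; simpl. intro E. subst. f_equal. apply proof_irrelevance.
Qed.

Lemma ball_of_eq {F : hyperfield} (x y : F) hx hy : ball x = ball y -> ball_of x hx = ball_of y hy.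
Proof. exact (balls_eq (ball_of x hx) (ball_of y hy)). Qed.

Lemma ball_rep_ball_of {F : hyperfield} (x : F) hx : ball (ball_rep (ball_of x hx)) = ball x.
Proof. symmetry. apply (ball_rep_spec (ball_of x hx)). Qed.

Lemma balls_ind {F : hyperfield} (P : balls F -> Prop) :
  (forall x hx, P (ball_of x hx)) -> forall g, P g.
Proof.
  intros H g. replace g with (ball_of (ball_rep g) (ball_rep_neq0 g)); [apply H|].
  apply balls_eq. symmetry. apply ball_rep_spec.
Qed.

Definition vadd {F : hyperfield} (g h : balls F) : balls F :=
  ball_of (hmul (ball_rep g) (ball_rep h)) (hmul_neq0 _ _ (ball_rep_neq0 g) (ball_rep_neq0 h)).

Definition vzero (F : hyperfield) : balls F := ball_of (hone F) (hone_neq0 F).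

Definition vopp {F : hyperfield} (g : balls F) : balls F :=
  ball_of (hinv (ball_rep g)) (hinv_neq0 _ (ball_rep_neq0 g)).

Definition vle {F : hyperfield} (g h : balls F) : Prop := subset (proj1_sig h) (proj1_sig g).

Lemma vadd_ball_of {F : hyperfield} (x y : F) hx hy :
  vadd (ball_of x hx) (ball_of y hy) = ball_of (hmul x y) (hmul_neq0 x y hx hy).
Proof. apply ball_of_eq, ball_mul_congr; auto using ball_rep_neq0, ball_rep_ball_of. Qed.

Lemma vopp_ball_of {F : hyperfield} (x : F) hx :
  vopp (ball_of x hx) = ball_of (hinv x) (hinv_neq0 x hx).
Proof. apply ball_of_eq, ball_hinv_congr; auto using ball_rep_neq0, ball_rep_ball_of. Qed.

Lemma vaddA {F : hyperfield} (a b c : balls F) : vadd a (vadd b c) = vadd (vadd a b) c.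
Proof.
  revert a b c. refine (balls_ind _ _). intros x hx. refine (balls_ind _ _). intros y hy.
  refine (balls_ind _ _). intros z hz. rewrite !vadd_ball_of. apply ball_of_eq. now rewrite hmul_assoc.
Qed.

Lemma vaddC {F : hyperfield} (a b : balls F) : vadd a b = vadd b a.
Proof.
  revert a b. refine (balls_ind _ _). intros x hx. refine (balls_ind _ _). intros y hy.
  rewrite !vadd_ball_of. apply ball_of_eq. now rewrite hmul_comm.
Qed.

Lemma vadd0 {F : hyperfield} (a : balls F) : vadd (vzero F) a = a.
Proof.
  revert a. refine (balls_ind _ _). intros x hx. unfold vzero. rewrite vadd_ball_of.
  apply ball_of_eq. now rewrite hmul_1l.
Qed.

Lemma vaddN {F : hyperfield} (a : balls F) : vadd (vopp a) a = vzero F.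
Proof.
  revert a. refine (balls_ind _ _). intros x hx. unfold vzero. rewrite vopp_ball_of, vadd_ball_of.
  apply ball_of_eq. now rewrite hmul_comm, hmul_hinv.
Qed.

Lemma vle_refl {F : hyperfield} (a : balls F) : vle a a.
Proof. unfold vle, subset. auto. Qed.

Lemma vle_trans {F : hyperfield} (a b c : balls F) : vle a b -> vle b c -> vle a c.
Proof. unfold vle, subset. auto. Qed.

Lemma vle_antisym {F : hyperfield} (a b : balls F) : vle a b -> vle b a -> a = b.
Proof. unfold vle. intros H1 H2. apply balls_eq, set_eq_ext. split; auto. Qed.

Lemma vle_total {F : hyperfield} (SC : superiorly_canonical F) (a b : balls F) : vle a b \/ vle b a.
Proof.
  revert a b. refine (balls_ind _ _). intros x hx. refine (balls_ind _ _). intros y hy.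
  apply (ball_total F SC).
Qed.

Lemma vle_add {F : hyperfield} (a b c : balls F) : vle a b -> vle (vadd a c) (vadd b c).
Proof.
  revert a b c. refine (balls_ind _ _). intros x hx. refine (balls_ind _ _). intros y hy.
  refine (balls_ind _ _). intros z hz. rewrite !vadd_ball_of. unfold vle; simpl.
  intros H d. rewrite !(ball_mul_r _ z d hz). apply H.
Qed.

Definition value_group (F : hyperfield) (SC : superiorly_canonical F) : OAG :=
  {| og_car := balls F; og_add := vadd; og_zero := vzero F; og_opp := vopp; og_le := vle;
     og_addA := vaddA; og_addC := vaddC; og_add0 := vadd0; og_addN := vaddN;
     og_le_refl := vle_refl; og_le_trans := vle_trans; og_le_antisym := vle_antisym;
     og_le_total := vle_total SC; og_le_add := vle_add |}.

Section BallValuation.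

Variable F : hyperfield.
Hypothesis SC : superiorly_canonical F.

Definition ball_val (x : F) : option (value_group F SC) :=
  match excluded_middle_informative (x = hzero F) with
  | left _ => None
  | right hx => Some (ball_of x hx)
  end.

Definition ball_norm (g : value_group F SC) : Prop := ~ ball (hone F) (ball_rep g).

Lemma ball_val_0 : ball_val (hzero F) = None.
Proof. unfold ball_val. destruct excluded_middle_informative; [reflexivity | congruence]. Qed.

Lemma ball_val_ball_of (x : F) (hx : x <> hzero F) : ball_val x = Some (ball_of x hx).
Proof.
  unfold ball_val. destruct excluded_middle_informative; [congruence|].
  f_equal. now apply ball_of_eq.
Qed.

Lemma ball_val_eq_None (x : F) : ball_val x = None <-> x = hzero F.
Proof.
  split; intro H.
  - apply NNPP. intro hx. rewrite (ball_val_ball_of x hx) in H. discriminate.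
  - subst. apply ball_val_0.
Qed.

Lemma ball_norm_ball_of (x : F) hx : ball_norm (ball_of x hx) <-> ~ ball (hone F) x.
Proof.
  unfold ball_norm. pose proof (ball_rep_ball_of x hx) as E.
  split; intros H1 H2; apply H1.
  - now apply (ball_one_congr x).
  - exact (ball_one_congr _ x (ball_rep_neq0 _) E H2).
Qed.

Lemma ball_norm_translate (w e : F) hw he :
  in_translate ball_norm (ball_of w hw) (ball_of e he) <-> ~ ball w e.
Proof.
  unfold in_translate; simpl. rewrite vopp_ball_of, vadd_ball_of, ball_norm_ball_of.
  rewrite <- (ball_scale_iff w (hone F) _ hw), hmul_1_r, (hmul_comm e), hmul_assoc,
    (hmul_hinv w hw), hmul_1l.
  reflexivity.
Qed.

Lemma ball_val_le_subset (x y : F) : ext_le (ball_val x) (ball_val y) -> subset (ball y) (ball x).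
Proof.
  destruct (classic (y = hzero F)) as [Ey|Ey].
  - subst. intros _ d Hd. apply ball_of_0 in Hd. subst. apply ball_0.
  - rewrite (ball_val_ball_of y Ey). destruct (classic (x = hzero F)) as [Ex|Ex].
    + subst. rewrite ball_val_0. contradiction.
    + rewrite (ball_val_ball_of x Ex). auto.
Qed.

Lemma ball_val_le_of_subset (x y : F) :
  x <> hzero F -> subset (ball y) (ball x) -> ext_le (ball_val x) (ball_val y).
Proof.
  intros hx H. rewrite (ball_val_ball_of x hx). destruct (classic (y = hzero F)) as [Ey|Ey].
  - subst. now rewrite ball_val_0.
  - now rewrite (ball_val_ball_of y Ey).
Qed.

Lemma ball_val_hadd_le (x y z : F) :
  hadd x y z -> ext_le (ball_val x) (ball_val y) -> ext_le (ball_val x) (ball_val z).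
Proof.
  intros Hz H. destruct (classic (x = hzero F)) as [Ex|Ex].
  - subst. rewrite ball_val_0 in *. destruct (ball_val y) eqn:Ey; [contradiction|].
    apply ball_val_eq_None in Ey. subst. apply hadd_0_l_eq in Hz. subst.
    now rewrite ball_val_0.
  - apply ball_val_le_of_subset; auto.
    exact (ball_hadd_subset F SC x y z Hz (ball_val_le_subset x y H)).
Qed.

Lemma ball_val_valuation : valuation ball_val.
Proof.
  split; [|split; [exact ball_val_eq_None|split]].
  - intros [g|]; [|exists (hzero F); apply ball_val_0].
    revert g. refine (balls_ind _ _). intros x hx. exists x. apply ball_val_ball_of.
  - intros x y. destruct (classic (x = hzero F)) as [Ex|Ex].
    + subst. now rewrite hmul_0l, ball_val_0.
    + destruct (classic (y = hzero F)) as [Ey|Ey].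
      * subst. rewrite hmul_0_r, ball_val_0. now destruct (ball_val x).
      * rewrite (ball_val_ball_of x Ex), (ball_val_ball_of y Ey),
          (ball_val_ball_of _ (hmul_neq0 x y Ex Ey)).
        simpl. now rewrite vadd_ball_of.
  - intros x y z Hz. destruct (ext_le_total (ball_val x) (ball_val y)) as [H|H].
    + exists (ball_val x). split; [now left | eapply ball_val_hadd_le; eauto].
    + exists (ball_val y). split; [now right | eapply ball_val_hadd_le; eauto].
      now apply hadd_comm.
Qed.

Lemma ball_val_above (x s : F) : above ball_norm (ball_val x) (ball_val s) <-> ball x s.
Proof.
  destruct (classic (x = hzero F)) as [Ex|Ex].
  - subst. rewrite ball_val_0, ball_of_0. apply ball_val_eq_None.
  - rewrite (ball_val_ball_of x Ex). destruct (classic (s = hzero F)) as [Es|Es].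
    + subst. rewrite ball_val_0. split; intros _; [apply ball_0 | exact I].
    + rewrite (ball_val_ball_of s Es). simpl. rewrite ball_norm_translate.
      split; [apply NNPP | auto].
Qed.

Lemma ball_val_above_min (x y s : F) m :
  is_min m (ball_val x) (ball_val y) -> (above ball_norm m (ball_val s) <-> ball x s \/ ball y s).
Proof.
  intros [[H E]|[H E]]; subst m; rewrite ball_val_above.
  - pose proof (ball_val_le_subset x y H). split; auto. intros [?|?]; auto.
  - pose proof (ball_val_le_subset y x H). split; auto. intros [?|?]; auto.
Qed.

Lemma ball_val_hsum_const (x y : F) : ~ hsum x y (hzero F) ->
  exists g, (exists z, hsum x y z /\ ball_val z = g) /\ (forall z, hsum x y z -> ball_val z = g).
Proof.
  intro H0. destruct (hadd_nonempty x y) as [z0 Hz0].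
  exists (ball_val z0). split; [now exists z0|]. intros z Hz.
  assert (hxy : x <> hneg y) by (intro E; subst; apply H0, hadd_comm, hneg_spec).
  assert (hz : z <> hzero F) by (intro E; subst; auto).
  assert (hz0 : z0 <> hzero F) by (intro E; subst; auto).
  rewrite (ball_val_ball_of z hz), (ball_val_ball_of z0 hz0). f_equal. apply ball_of_eq.
  apply (ball_hdiff_eq F SC x (hneg y)); auto; unfold hdiff, hsum; now rewrite hneg_involutive.
Qed.

Lemma ball_norm_initial_segment : initial_segment ball_norm.
Proof.
  refine (balls_ind _ _). intros u hu. refine (balls_ind _ _). intros a ha.
  rewrite !ball_norm_ball_of. simpl. intros Hu Hsub Ha. apply Hu.
  apply (ball_one_congr a); auto. apply set_eq_ext. intro d. split; [|apply Hsub].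
  exact (ball_subset_of_notin F SC (hone F) a u Ha Hu d).
Qed.

Lemma ball_val_krasner : krasner_valuation ball_val ball_norm.
Proof.
  split; [apply ball_val_valuation|]. split; [exact ball_val_hsum_const|].
  split; [exact ball_norm_initial_segment|]. split.
  - simpl. unfold vzero. rewrite ball_norm_ball_of. apply (ball_not_self F SC), hone_neq0.
  - intros x y z t Hz. unfold hsum. rewrite (hadd_iff_hdiff_in_balls F SC x y z t Hz).
    destruct (is_min_exists (ball_val x) (ball_val y)) as [m0 Hm0].
    split.
    + intros H s Hs m Hm. apply (ball_val_above_min x y s m Hm). now apply H.
    + intros H s Hs. apply (ball_val_above_min x y s m0 Hm0). now apply H.
Qed.

Lemma ball_norm_ig_trivial : ig_trivial ball_norm.
Proof.
  intro g. split; [|intro E; subst; apply ig_zero].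
  revert g. refine (balls_ind _ _). intros w hw H. apply ball_of_eq, set_eq_ext. intro e.
  destruct (classic (e = hzero F)) as [Ee|Ee]; [subst; split; intros; apply ball_0|].
  pose proof (H (ball_of e Ee)) as He.
  rewrite ball_norm_translate, ball_norm_ball_of in He.
  destruct (classic (ball w e)), (classic (ball (hone F) e)); tauto.
Qed.

End BallValuation.

Section KrasnerValuation.

Variables (F : hyperfield) (G : OAG) (v : F -> option G) (rho : G -> Prop).
Hypothesis K : krasner_valuation v rho.

Lemma krasner_val_neq0 (x : F) : x <> hzero F -> exists a, v x = Some a.
Proof.
  destruct K as [[_ [H0 _]] _]. intro hx. destruct (v x) as [a|] eqn:E; eauto.
  apply H0 in E. contradiction.
Qed.

Lemma krasner_val_one : v (hone F) = Some (og_zero G).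
Proof.
  destruct K as [[_ [H0 [Hm _]]] _]. pose proof (Hm (hone F) (hone F)) as E.
  rewrite hmul_1l in E. destruct (v (hone F)) as [c|] eqn:Ev.
  - simpl in E. injection E as E. f_equal. now apply og_idem_eq0.
  - apply H0 in Ev. contradiction (hone_neq0 F).
Qed.

Lemma krasner_val_neg (x : F) : v (hneg x) = v x.
Proof.
  destruct K as [[_ [_ [Hm _]]] _].
  assert (Em : v (hneg (hone F)) = Some (og_zero G)).
  { pose proof (Hm (hneg (hone F)) (hneg (hone F))) as E.
    rewrite <- hneg_mul_m1, hneg_involutive, krasner_val_one in E.
    destruct (v (hneg (hone F))) as [c|]; simpl in E; [|discriminate].
    injection E as E. f_equal. now apply og_double_eq0. }
  rewrite hneg_mul_m1, Hm, Em. destruct (v x); simpl; auto. now rewrite og_add0.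
Qed.

(* KVH2 for x, -x and z = 0. *)
Lemma krasner_ball (x s : F) : ball x s <-> above rho (v x) (v s).
Proof.
  destruct K as [_ [_ [_ [_ KVH2]]]].
  unfold ball, hdiff. rewrite (KVH2 x (hneg x) (hzero F) s (hneg_spec x)). split.
  - intro H. specialize (H (hneg s)). rewrite !krasner_val_neg in H. apply H.
    + apply hadd_comm, hadd_0_r.
    + left. split; [apply ext_le_refl | reflexivity].
  - intros H s' Hs' m Hm. apply hadd_0_l_eq in Hs'. subst s'.
    rewrite !krasner_val_neg in *. now destruct Hm as [[_ E]|[_ E]]; subst.
Qed.

Lemma krasner_le_ball_subset (x y : F) (a b : G) :
  v x = Some a -> v y = Some b -> og_le a b -> subset (ball y) (ball x).
Proof.
  destruct K as [[_ [H0 _]] [_ [Hin _]]]. intros Ea Eb L s Hy.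
  destruct (v s) as [c|] eqn:Ec; [|apply H0 in Ec; subst; apply ball_0].
  apply krasner_ball. apply krasner_ball in Hy. rewrite Ea, Ec. rewrite Eb, Ec in Hy.
  simpl in *. unfold in_translate in *. intro R. apply Hy.
  apply (Hin _ _ R). apply og_le_add_l, og_le_opp, L.
Qed.

Lemma krasner_ig_of_ball_subset (x y : F) (a b : G) :
  v x = Some a -> v y = Some b -> og_le b a -> subset (ball y) (ball x) ->
  ig rho (og_opp (og_add a (og_opp b))).
Proof.
  destruct K as [[Hs _] [_ [Hin _]]]. intros Ea Eb L Hsub e.
  unfold in_translate. rewrite og_opp_involutive. split.
  - intro R. apply (Hin _ _ R), og_le_add_nonneg.
    pose proof (og_le_add _ _ (og_opp b) L) as L'. now rewrite og_addN_r in L'.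
  - intro R. apply NNPP. intro NR. destruct (Hs (Some (og_add e a))) as [s Es].
    assert (Hys : ball y s).
    { apply krasner_ball. rewrite Eb, Es. simpl. unfold in_translate. now rewrite <- og_addA. }
    apply Hsub, krasner_ball in Hys. rewrite Ea, Es in Hys. simpl in Hys.
    unfold in_translate in Hys. rewrite <- og_addA, og_addN_r, og_add0_r in Hys. auto.
Qed.

Lemma krasner_le_iff_ball_subset (x y : F) (a b : G) : ig_trivial rho ->
  v x = Some a -> v y = Some b -> (og_le a b <-> subset (ball y) (ball x)).
Proof.
  intros Hig Ea Eb. split; [exact (krasner_le_ball_subset x y a b Ea Eb)|].
  intro Hsub. destruct (og_le_total a b) as [L|L]; [exact L|].
  pose proof (proj1 (Hig _) (krasner_ig_of_ball_subset x y a b Ea Eb L Hsub)) as E.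
  apply (f_equal og_opp) in E. rewrite og_opp_involutive, og_opp0, <- (og_addN_r b) in E.
  apply og_add_cancel_r in E. subst. apply og_le_refl.
Qed.

End KrasnerValuation.

Definition val_preimage {F : hyperfield} {G : OAG} (v : F -> option G) (a : G) : F :=
  epsilon (inhabits (hzero F)) (fun x => v x = Some a).

Lemma val_preimage_spec {F : hyperfield} {G : OAG} (v : F -> option G) (a : G) :
  valuation v -> v (val_preimage v a) = Some a.
Proof.
  intros [Hs _]. apply (epsilon_spec _ (fun x => v x = Some a)), Hs.
Qed.

Definition val_transfer {F : hyperfield} {G1 G2 : OAG}
    (v1 : F -> option G1) (v2 : F -> option G2) (a : G1) : G2 :=
  match v2 (val_preimage v1 a) with Some b => b | None => og_zero G2 end.

Section Uniqueness.

Variables (F : hyperfield) (G1 G2 : OAG).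
Variables (v1 : F -> option G1) (rho1 : G1 -> Prop) (v2 : F -> option G2) (rho2 : G2 -> Prop).
Hypotheses (K1 : krasner_valuation v1 rho1) (I1 : ig_trivial rho1).
Hypotheses (K2 : krasner_valuation v2 rho2) (I2 : ig_trivial rho2).

Lemma krasner_val_transfer (x : F) (a : G1) :
  v1 x = Some a -> v2 x = Some (val_transfer v1 v2 a).
Proof.
  intro Ex. pose proof (val_preimage_spec v1 a (proj1 K1)) as Ep. unfold val_transfer.
  set (p := val_preimage v1 a) in *.
  destruct K1 as [[_ [N1 _]] _].
  assert (hp : p <> hzero F) by (intro E; apply N1 in E; congruence).
  assert (hx : x <> hzero F) by (intro E; apply N1 in E; congruence).
  destruct (krasner_val_neq0 F G2 v2 rho2 K2 p hp) as [b Eb].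
  destruct (krasner_val_neq0 F G2 v2 rho2 K2 x hx) as [b' Eb'].
  rewrite Eb, Eb'. f_equal.
  apply og_le_antisym.
  - apply (krasner_le_iff_ball_subset F G2 v2 rho2 K2 x p b' b I2 Eb' Eb),
      (krasner_le_iff_ball_subset F G1 v1 rho1 K1 x p a a I1 Ex Ep), og_le_refl.
  - apply (krasner_le_iff_ball_subset F G2 v2 rho2 K2 p x b b' I2 Eb Eb'),
      (krasner_le_iff_ball_subset F G1 v1 rho1 K1 p x a a I1 Ep Ex), og_le_refl.
Qed.

Lemma krasner_valuations_equivalent : equivalent_valuations v1 v2.
Proof.
  pose proof (fun a => val_preimage_spec v1 a (proj1 K1)) as Ep.
  pose proof krasner_val_transfer as T.
  exists (val_transfer v1 v2). split; [|split; [|split]].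
  - intros a b. destruct K1 as [[_ [_ [M1 _]]] _], K2 as [[_ [_ [M2 _]]] _].
    assert (E : v1 (hmul (val_preimage v1 a) (val_preimage v1 b)) = Some (og_add a b))
      by (rewrite M1, !Ep; reflexivity).
    apply T in E. rewrite M2, (T _ a (Ep a)), (T _ b (Ep b)) in E.
    now injection E.
  - intros a b.
    rewrite (krasner_le_iff_ball_subset F G1 v1 rho1 K1 _ _ a b I1 (Ep a) (Ep b)).
    now rewrite (krasner_le_iff_ball_subset F G2 v2 rho2 K2 _ _ _ _ I2 (T _ a (Ep a)) (T _ b (Ep b))).
  - intro b. destruct K2 as [[Hs2 [N2 _]] _]. destruct (Hs2 (Some b)) as [y Ey].
    assert (hy : y <> hzero F) by (intro E; apply N2 in E; congruence).
    destruct (krasner_val_neq0 F G1 v1 rho1 K1 y hy) as [a Ea].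
    exists a. apply T in Ea. congruence.
  - intro x. destruct (v1 x) as [a|] eqn:E; simpl; [now apply T|].
    destruct K1 as [[_ [N1 _]] _], K2 as [[_ [N2 _]] _]. now apply N2, N1.
Qed.

End Uniqueness.

Theorem corollary6p6 (F : hyperfield) :
  superiorly_canonical F ->
  (exists (G : OAG) (v : F -> option G) (rho : G -> Prop),
      krasner_valuation v rho /\ ig_trivial rho) /\
  (forall (G1 : OAG) (v1 : F -> option G1) (rho1 : G1 -> Prop)
          (G2 : OAG) (v2 : F -> option G2) (rho2 : G2 -> Prop),
      krasner_valuation v1 rho1 -> ig_trivial rho1 ->
      krasner_valuation v2 rho2 -> ig_trivial rho2 ->
      equivalent_valuations v1 v2).
Proof.
  intro SC. split.
  - exists (value_group F SC), (ball_val F SC), (ball_norm F SC).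
    split; [apply ball_val_krasner | apply ball_norm_ig_trivial].
  - intros G1 v1 rho1 G2 v2 rho2. apply krasner_valuations_equivalent.
Qed.
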